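(* Let $E$ be an ordered normed space and $n\ge1$. Then for every $\mathbf{x}\in E^{\otimes n}$, $\|\mathbf{x}\|_{\pi+,E}=\|\mathbf{x}\|_{\pi,E^+}$; that is, the positive projective norm $\|\cdot\|_{\pi+}$ on $E^{\otimes n}$ coincides with the (ordinary) projective tensor norm of the normed space $E^+$.
   Context: All vector spaces are real. An ordered normed space is a real normed space $E$ together with a closed convex cone $E_+\subseteq E$ (its elements are called positive, written $x\ge0$) such that $E=E_+-E_+$ and such that, writing $\|x\|_+:=\inf\{\|y\|+\|z\|: x=y-z,\ y,z\in E_+\}$, the constant $c_+(E):=\sup\{\|x\|_+:\|x\|\le1\}$ is finite. $E^+$ denotes the vector space $E$ equipped with the norm $\|\cdot\|_+$. $E^{\otimes n}$ is the algebraic $n$-th tensor power of $E$. For a normed space $F$, the projective norm on $F^{\otimes n}$ is $\|\mathbf{x}\|_{\pi,F}:=\inf\{\sum_{k=1}^N|a_k|\,\|x_{1k}\|\cdots\|x_{nk}\| : \mathbf{x}=\sum_{k=1}^N a_k\,x_{1k}\otimes\cdots\otimes x_{nk},\ a_k\in\mathbb{R},\ x_{ik}\in F\}$. The positive projective norm on $E^{\otimes n}$ is $\|\mathbf{x}\|_{\pi+,E}:=\inf\{\sum_{k=1}^N|a_k|\,\|x_{1k}\|\cdots\|x_{nk}\| : \mathbf{x}=\sum_{k=1}^N a_k\,x_{1k}\otimes\cdots\otimes x_{nk},\ a_k\in\mathbb{R},\ x_{ik}\in E_+\}$ (norms $\|\cdot\|$ of $E$). *)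

From Stdlib Require List.
From HB Require Import structures.
From mathcomp Require Import all_boot all_order all_algebra.
From mathcomp Require Import all_classical all_reals.
From mathcomp Require Import topology normedtype.
Set Implicit Arguments. Unset Strict Implicit. Unset Printing Implicit Defensive.
Import Order.TTheory GRing.Theory Num.Theory.
Local Open Scope ring_scope.
Local Open Scope classical_set_scope.

Definition pos_norm (R : realType) (E : normedModType R) (P : set E) (x : E) : R :=
  inf [set c | exists y z, P y /\ P z /\ x = y - z /\ c = `|y| + `|z|].

Definition ordered_normed_space (R : realType) (E : normedModType R) (P : set E) : Prop :=
  closed P /\
  P 0 /\
  (forall x y, P x -> P y -> P (x + y)) /\
  (forall (a : R) x, 0 <= a -> P x -> P (a *: x)) /\
  (forall x, exists y z, P y /\ P z /\ x = y - z) /\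
  (exists C : R, forall x : E, `|x| <= 1 -> pos_norm P x <= C).

Definition upd (E : Type) (n : nat) (v : 'I_n -> E) (i : 'I_n) (w : E) : 'I_n -> E :=
  fun j => if j == i then w else v j.

Definition multilinear (R : realType) (E : normedModType R) (n : nat)
  (f : ('I_n -> E) -> R) : Prop :=
  forall (v : 'I_n -> E) (i : 'I_n) (a : R) (x y : E),
    f (upd v i (a *: x + y)) = a * f (upd v i x) + f (upd v i y).

(* A formal expression sum_k a_k x_{1k} (x) ... (x) x_{nk}, given as a list of
   pairs (a_k, (x_{ik})_i). *)
Definition tensor_expr (R : realType) (E : normedModType R) (n : nat) :=
  seq (R * ('I_n -> E)).

Definition texpr_eval (R : realType) (E : normedModType R) (n : nat)
  (f : ('I_n -> E) -> R) (s : tensor_expr E n) : R :=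
  \sum_(p <- s) p.1 * f p.2.

(* Two formal expressions denote the same element of the algebraic tensor
   power E^{(x)n} iff they agree on every n-linear form (universal property). *)
Definition tensor_eq (R : realType) (E : normedModType R) (n : nat)
  (s t : tensor_expr E n) : Prop :=
  forall f, multilinear f -> texpr_eval f s = texpr_eval f t.

Definition texpr_cost (R : realType) (E : normedModType R) (n : nat)
  (N : E -> R) (s : tensor_expr E n) : R :=
  \sum_(p <- s) `|p.1| * \prod_(i < n) N (p.2 i).

Definition proj_inf (R : realType) (E : normedModType R) (n : nat)
  (N : E -> R) (Q : set E) (t : tensor_expr E n) : R :=
  inf [set c | exists s : tensor_expr E n,
        tensor_eq s t /\ (forall p, List.In p s -> forall i, Q (p.2 i)) /\
        c = texpr_cost N s].

Definition pos_proj_norm (R : realType) (E : normedModType R) (P : set E) (n : nat)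
  (t : tensor_expr E n) : R :=
  proj_inf (fun x : E => `|x|) P t.

(* projective norm ||t||_{pi,E^+} of the normed space E^+ = (E, ||.||_+) *)
Definition proj_norm_Eplus (R : realType) (E : normedModType R) (P : set E) (n : nat)
  (t : tensor_expr E n) : R :=
  proj_inf (pos_norm P) setT t.

From HB Require Import structures.
From mathcomp Require Import all_boot all_order all_algebra.
From mathcomp Require Import all_classical all_reals.
From mathcomp Require Import topology normedtype ring lra.
Set Implicit Arguments. Unset Strict Implicit. Unset Printing Implicit Defensive.
Import Order.TTheory GRing.Theory Num.Theory.
Local Open Scope ring_scope.
Local Open Scope classical_set_scope.

(* Since ||x|| <= ||x||_+ for all x and ||x||_+ <= ||x|| for x >= 0, a
   representation of t by positive vectors costs at least as much in ||.|| as
   in ||.||_+, whence ||t||_{pi,E^+} <= ||t||_{pi+}.  Conversely, write every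
   vector x of an arbitrary representation as y - z with y, z >= 0 and
   ||y|| + ||z|| <= lam ||x||_+ (lam > 1), and expand multilinearly, one tensor
   coordinate at a time: this gives a positive representation whose cost is at
   most lam^n times the ||.||_+-cost of the original one.  Let lam decrease
   to 1. *)

Lemma expr1D_le_chord (R : realFieldType) (x : R) n :
  0 <= x <= 1 -> (1 + x) ^+ n <= 1 + (2 ^+ n - 1) * x.
Proof.
case/andP=> x_ge0 x_le1; elim: n => [|n IHn].
  by rewrite !expr0 subrr mul0r addr0.
have two_n_ge1 : 1 <= (2 : R) ^+ n by rewrite exprn_ege1 // ler1n.
have pow_ge0 : 0 <= (1 + x) ^+ n by rewrite exprn_ge0 // addr_ge0.
rewrite !exprS; move: IHn two_n_ge1 pow_ge0.
set a := (1 + x) ^+ n; set b := (2 : R) ^+ n => IHn two_n_ge1 pow_ge0.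
have step : (1 + x) * a <= (1 + x) * (1 + (b - 1) * x).
  by apply: ler_wpM2l => //; lra.
have sq_le : (b - 1) * (x * x) <= (b - 1) * x by apply: ler_wpM2l; nra.
nra.
Qed.

Lemma le_of_forall_gt1_exprM (R : realFieldType) (a c : R) n : 0 <= c ->
  (forall lam, 1 < lam -> a <= lam ^+ n * c) -> a <= c.
Proof.
move=> c_ge0 a_le; apply/ler_addgt0Pr => e e_gt0.
have two_n_ge1 : 1 <= (2 : R) ^+ n by rewrite exprn_ege1 // ler1n.
set K := 2 ^+ n * c + 1.
have K_gt0 : 0 < K by rewrite ltr_pwDr // mulr_ge0 // exprn_ge0.
set eta := e / (K + e).
have eta_gt0 : 0 < eta by rewrite divr_gt0 // addr_gt0.
have eta_K : eta * (K + e) = e by rewrite divfK // gt_eqF // addr_gt0.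
have eta_le1 : eta <= 1 by nra.
apply: le_trans (a_le (1 + eta) _) _; first lra.
have chord : (1 + eta) ^+ n <= 1 + (2 ^+ n - 1) * eta.
  by apply: expr1D_le_chord; rewrite ltW.
apply: le_trans (ler_wpM2r c_ge0 chord) _.
rewrite mulrDl mul1r lerD2l.
have eta_c_ge0 : 0 <= eta * c by rewrite mulr_ge0 // ltW.
move: eta_K; rewrite /K; clearbody eta; nra.
Qed.

Section PositiveNorm.
Variables (R : realType) (E : normedModType R) (P : set E).
Hypothesis P0 : P 0.
Hypothesis P_generating : forall x, exists y z, P y /\ P z /\ x = y - z.

Let decomposition_costs (x : E) :=
  [set c | exists y z, P y /\ P z /\ x = y - z /\ c = `|y| + `|z|].

Lemma decomposition_costs_neq0 x : decomposition_costs x !=set0.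
Proof.
have [y [z [Py [Pz ->]]]] := P_generating x.
by exists (`|y| + `|z|), y, z.
Qed.

Lemma normr_le_pos_norm x : `|x| <= pos_norm P x.
Proof.
apply: lb_le_inf; first exact: decomposition_costs_neq0.
by move=> _ [y [z [_ [_ [-> ->]]]]]; exact: ler_normB.
Qed.

Lemma pos_norm_ge0 x : 0 <= pos_norm P x.
Proof. exact: le_trans (normr_le_pos_norm x). Qed.

Lemma pos_norm_le_normr x : P x -> pos_norm P x <= `|x|.
Proof.
move=> Px; rewrite -[leRHS]addr0 -(normr0 E).
apply: ge_inf; last by exists x, 0; rewrite subr0.
by exists 0 => _ [y [z [_ [_ [_ ->]]]]]; exact: addr_ge0.
Qed.

Lemma pos_norm_approx (lam : R) x : 1 < lam ->
  exists y z, P y /\ P z /\ x = y - z /\ `|y| + `|z| <= lam * pos_norm P x.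
Proof.
move=> lam_gt1; have [->|x_neq0] := eqVneq x 0.
  exists 0, 0; rewrite subr0 normr0 addr0.
  by do 3!split=> //; rewrite mulr_ge0 ?pos_norm_ge0 // ltW // (lt_trans ltr01).
have pos_norm_gt0 : 0 < pos_norm P x.
  by apply: lt_le_trans (normr_le_pos_norm x); rewrite normr_gt0.
have : pos_norm P x < lam * pos_norm P x by rewrite ltr_pMl.
case/(inf_lt (decomposition_costs_neq0 x)) => _ [y [z [Py [Pz [-> ->]]]]] lt.
by exists y, z; do 3!split=> //; exact: ltW.
Qed.

Lemma positive_parts_approx (lam : R) : 1 < lam ->
  exists Y Z : E -> E, [/\ forall x, P (Y x), forall x, P (Z x),
    forall x, x = Y x - Z x & forall x, `|Y x| + `|Z x| <= lam * pos_norm P x].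
Proof.
move=> lam_gt1.
have /choice [YZ YZ_spec] : forall x, exists yz : E * E,
    [/\ P yz.1, P yz.2, x = yz.1 - yz.2 & `|yz.1| + `|yz.2| <= lam * pos_norm P x].
  move=> x; have [y [z [? [? [? ?]]]]] := pos_norm_approx x lam_gt1.
  by exists (y, z).
by exists (fun x => (YZ x).1), (fun x => (YZ x).2); split=> x; case: (YZ_spec x).
Qed.

End PositiveNorm.

Section Update.
Variables (T : Type) (n : nat).

Lemma upd_id (v : 'I_n -> T) i : upd v i (v i) = v.
Proof. by apply: funext => j; rewrite /upd; case: eqVneq => // ->. Qed.

Lemma upd_eq (v : 'I_n -> T) i w : upd v i w i = w.
Proof. by rewrite /upd eqxx. Qed.

Lemma upd_neq (v : 'I_n -> T) i w j : j != i -> upd v i w j = v j.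
Proof. by rewrite /upd => /negbTE ->. Qed.

End Update.

Section Splitting.
Variables (R : realType) (E : normedModType R) (n : nat) (Y Z : E -> E).

Fixpoint split_coord (i : 'I_n) (s : tensor_expr E n) : tensor_expr E n :=
  if s is p :: s' then
    (p.1, upd p.2 i (Y (p.2 i))) :: (- p.1, upd p.2 i (Z (p.2 i)))
      :: split_coord i s'
  else [::].

Definition split_coords (l : seq 'I_n) (s : tensor_expr E n) : tensor_expr E n :=
  foldr split_coord s l.

Section Evaluation.
Hypothesis YZ_sub : forall x, x = Y x - Z x.

Lemma texpr_eval_split_coord f i s :
  multilinear f -> texpr_eval f (split_coord i s) = texpr_eval f s.
Proof.
move=> f_lin; elim: s => [//|p s IHs].
rewrite /texpr_eval !big_cons /= -/(texpr_eval f _) IHs addrA; congr (_ + _).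
have -> : f p.2 = f (upd p.2 i ((-1) *: Z (p.2 i) + Y (p.2 i))).
  by rewrite scaleN1r addrC -YZ_sub upd_id.
by rewrite f_lin; ring.
Qed.

Lemma tensor_eq_split_coords l s : tensor_eq (split_coords l s) s.
Proof.
move=> f f_lin; elim: l => [//|i l IHl] /=.
by rewrite texpr_eval_split_coord.
Qed.

End Evaluation.

Section Positivity.
Variable P : set E.
Hypotheses (PY : forall x, P (Y x)) (PZ : forall x, P (Z x)).

Lemma split_coord_in i l s :
  (forall p, List.In p s -> forall j, j \in l -> P (p.2 j)) ->
  forall p, List.In p (split_coord i s) -> forall j, j \in i :: l -> P (p.2 j).
Proof.
elim: s => [//|q s IHs] Ps p /=.
have Pupd w : P w -> forall j, j \in i :: l -> P (upd q.2 i w j).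
  move=> Pw j; rewrite in_cons.
  case: eqVneq => [->|j_neq_i] /=; first by rewrite upd_eq.
  by move=> jl; rewrite upd_neq //; apply: Ps => //; left.
case=> [<-|[<-|]]; [exact: Pupd | exact: Pupd |].
by apply: IHs => q' q's; apply: Ps; right.
Qed.

Lemma split_coords_in l s p :
  List.In p (split_coords l s) -> forall j, j \in l -> P (p.2 j).
Proof. by elim: l p => [//|i l IHl] /=; exact: split_coord_in. Qed.

End Positivity.

Section Cost.
Variables (N : E -> R) (lam : R).
Hypothesis N_ge0 : forall x, 0 <= N x.
Hypothesis lam_ge0 : 0 <= lam.
Hypothesis YZ_cost : forall x, `|Y x| + `|Z x| <= lam * N x.

Definition mixed_cost (l : seq 'I_n) (s : tensor_expr E n) : R :=
  \sum_(p <- s) `|p.1| * \prod_(j < n) (if j \in l then `|p.2 j| else N (p.2 j)).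

Lemma mixed_cost_nil s : mixed_cost [::] s = texpr_cost N s.
Proof.
by apply: eq_bigr => p _; congr (_ * _); apply: eq_bigr => j _; rewrite in_nil.
Qed.

Lemma mixed_cost_enum s :
  mixed_cost (enum 'I_n) s = texpr_cost (fun x : E => `|x|) s.
Proof.
by apply: eq_bigr => p _; congr (_ * _); apply: eq_bigr => j _; rewrite mem_enum.
Qed.

Lemma mixed_cost_split_coord i l s : i \notin l ->
  mixed_cost (i :: l) (split_coord i s) <= lam * mixed_cost l s.
Proof.
move=> il; elim: s => [|p s IHs]; first by rewrite /mixed_cost !big_nil mulr0.
rewrite /mixed_cost /= !big_cons.
rewrite -/(mixed_cost _ (split_coord i s)) -/(mixed_cost l s).
rewrite mulrDr addrA; apply: lerD => //.
set G := fun j => if j \in l then `|p.2 j| else N (p.2 j).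
set Q := \prod_(j < n | j != i) G j.
have Q_ge0 : 0 <= Q.
  by apply: prodr_ge0 => j _; rewrite /G; case: ifP.
have cost_upd w : \prod_(j < n) (if j \in i :: l then `|upd p.2 i w j|
    else N (upd p.2 i w j)) = `|w| * Q.
  rewrite (bigD1 i) //= in_cons eqxx upd_eq; congr (_ * _).
  by apply: eq_bigr => j j_neq_i; rewrite in_cons (negbTE j_neq_i) upd_neq.
have cost_p : \prod_(j < n) G j = N (p.2 i) * Q.
  by rewrite (bigD1 i) //= /G (negbTE il).
rewrite !cost_upd cost_p /= normrN -mulrDr -mulrDl [leRHS]mulrCA.
by apply: ler_wpM2l => //; rewrite mulrA; apply: ler_wpM2r.
Qed.

Lemma mixed_cost_split_coords l s : uniq l ->
  mixed_cost l (split_coords l s) <= lam ^+ size l * mixed_cost [::] s.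
Proof.
elim: l => [|i l IHl] /=; first by rewrite expr0 mul1r.
case/andP=> il l_uniq; apply: le_trans (mixed_cost_split_coord _ il) _.
by rewrite exprS -mulrA; apply: ler_wpM2l => //; exact: IHl.
Qed.

End Cost.

End Splitting.

Section ProjectiveNorms.
Variables (R : realType) (E : normedModType R) (n : nat).

Definition texpr_over (Q : set E) (s : tensor_expr E n) :=
  forall p, List.In p s -> forall i, Q (p.2 i).

Lemma tensor_eq_trans (s t u : tensor_expr E n) :
  tensor_eq s t -> tensor_eq t u -> tensor_eq s u.
Proof. by move=> st tu f f_lin; rewrite st // tu. Qed.

Lemma texpr_cost_ge0 (N : E -> R) (s : tensor_expr E n) :
  (forall x, 0 <= N x) -> 0 <= texpr_cost N s.
Proof. by move=> N_ge0; apply: sumr_ge0 => p _; rewrite mulr_ge0 // prodr_ge0. Qed.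

Lemma proj_inf_le_cost (N : E -> R) Q t s : (forall x, 0 <= N x) ->
  tensor_eq s t -> texpr_over Q s -> proj_inf N Q t <= texpr_cost N s.
Proof.
move=> N_ge0 st Qs; apply: ge_inf; last by exists s.
by exists 0 => _ [s' [_ [_ ->]]]; exact: texpr_cost_ge0.
Qed.

Lemma proj_inf_ge (N : E -> R) Q t c :
  (exists2 s, tensor_eq s t & texpr_over Q s) ->
  (forall s, tensor_eq s t -> texpr_over Q s -> c <= texpr_cost N s) ->
  c <= proj_inf N Q t.
Proof.
move=> [s st Qs] c_le; apply: lb_le_inf; first by exists (texpr_cost N s), s.
by move=> _ [s' [s't [Qs' ->]]]; exact: c_le.
Qed.

Variable P : set E.
Hypothesis P0 : P 0.
Hypothesis P_generating : forall x, exists y z, P y /\ P z /\ x = y - z.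

Lemma texpr_cost_pos_norm_le s : texpr_over P s ->
  texpr_cost (pos_norm P) s <= texpr_cost (fun x : E => `|x|) s.
Proof.
elim: s => [|p s IHs] Ps; first by rewrite /texpr_cost !big_nil.
rewrite /texpr_cost !big_cons.
apply: lerD; last by apply: IHs => q qs; apply: Ps; right.
apply: ler_wpM2l => //; apply: ler_prod => i _.
by rewrite pos_norm_ge0 ?pos_norm_le_normr //; apply: Ps; left.
Qed.

Lemma positive_representation (lam : R) s : 1 < lam ->
  exists2 s', tensor_eq s' s & texpr_over P s' /\
    texpr_cost (fun x : E => `|x|) s' <= lam ^+ n * texpr_cost (pos_norm P) s.
Proof.
move=> lam_gt1; have lam_ge0 : 0 <= lam by rewrite ltW // (lt_trans ltr01).
have [Y [Z [PY PZ YZ_sub YZ_cost]]] :=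
  positive_parts_approx P0 P_generating lam_gt1.
exists (split_coords Y Z (enum 'I_n) s); first exact: tensor_eq_split_coords.
split; first by move=> p ps i; apply: (split_coords_in PY PZ ps); rewrite mem_enum.
rewrite -(mixed_cost_enum (pos_norm P)) -mixed_cost_nil.
have := mixed_cost_split_coords (pos_norm_ge0 P_generating) lam_ge0 YZ_cost s
  (enum_uniq 'I_n).
by rewrite size_enum_ord.
Qed.

Lemma proj_norm_Eplus_le_pos_proj_norm (t : tensor_expr E n) :
  proj_norm_Eplus P t <= pos_proj_norm P t.
Proof.
apply: proj_inf_ge => [|s st Ps].
  by have [s' s't [Ps' _]] := positive_representation t (ltr1n R 2); exists s'.
apply: le_trans (texpr_cost_pos_norm_le Ps).
exact: proj_inf_le_cost (pos_norm_ge0 P_generating) st (fun _ _ _ => I).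
Qed.

Lemma pos_proj_norm_le_proj_norm_Eplus (t : tensor_expr E n) :
  pos_proj_norm P t <= proj_norm_Eplus P t.
Proof.
apply: proj_inf_ge => [|s st _]; first by exists t.
apply: le_of_forall_gt1_exprM => [|lam lam_gt1].
  exact: texpr_cost_ge0 (pos_norm_ge0 P_generating).
have [s' s's [Ps' cost_s']] := positive_representation s lam_gt1.
apply: le_trans cost_s'.
exact: proj_inf_le_cost (tensor_eq_trans s's st) Ps'.
Qed.

End ProjectiveNorms.

Theorem lemma4p4 (R : realType) (E : normedModType R) (P : set E) (n : nat)
  (hE : ordered_normed_space P) (hn : (1 <= n)%N) (t : tensor_expr E n) :
  pos_proj_norm P t = proj_norm_Eplus P t.
Proof.
have [_ [P0 [_ [_ [P_generating _]]]]] := hE.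
apply/le_anti/andP; split.
- exact: pos_proj_norm_le_proj_norm_Eplus.
- exact: proj_norm_Eplus_le_pos_proj_norm.
Qed.
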